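(* Let $n\ge1$, $\delta>0$, $N$ a multiple of $n$, $L=N/n$, $q_n=\frac{n\delta+\sqrt{n^2\delta^2+4n\delta}}2$, $\zeta=(\delta n+4)/(\delta n)$, $\rho=\frac{\sqrt\zeta-1}{\sqrt\zeta+1}$. Let $H\in\mathbb R^{N\times N}$ be the block tridiagonal matrix with $L\times L$ blocks of size $n\times n$, diagonal blocks $(\delta n+2)I_n$ except the last, which is $(q_n+1)I_n$, and blocks $-I_n$ on the first super- and sub-block-diagonals. Then $H$ is invertible and $Y=H^{-1}$ has the block form $Y=(y_{ij}I_n)_{i,j=1}^{L}$ with scalars $y_{ij}$ satisfying $$y_{t,t+\tau}\ge\frac{1-\rho}{\delta n+2}\rho^{\tau}>0\quad\text{for all }1\le t\le t+\tau\le L,\ \tau\ge0.$$ *)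

From HB Require Import structures.
From mathcomp Require Import all_boot all_order all_algebra.
Set Implicit Arguments. Unset Strict Implicit. Unset Printing Implicit Defensive.
Import Order.TTheory GRing.Theory Num.Theory.
Local Open Scope ring_scope.

Definition qn (R : rcfType) (n : nat) (delta : R) : R :=
  (n%:R * delta + Num.sqrt (n%:R ^+ 2 * delta ^+ 2 + 4 * n%:R * delta)) / 2.

Definition zeta (R : rcfType) (n : nat) (delta : R) : R :=
  (delta * n%:R + 4) / (delta * n%:R).

Definition rho (R : rcfType) (n : nat) (delta : R) : R :=
  (Num.sqrt (zeta n delta) - 1) / (Num.sqrt (zeta n delta) + 1).

(* Index i : 'I_N lies in block i %/ n (0-based) at position i %% n. *)
Definition Hmat (R : rcfType) (N n : nat) (delta : R) : 'M[R]_N :=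
  \matrix_(i < N, j < N)
    if (i %% n == j %% n)%N then
      let a := (i %/ n)%N in let b := (j %/ n)%N in
      if a == b then
        (if a == (N %/ n).-1 then qn n delta + 1 else delta * n%:R + 2)
      else if (a.+1 == b) || (b.+1 == a) then -1 else 0
    else 0.

From HB Require Import structures.
From mathcomp Require Import all_boot all_order all_algebra.
From mathcomp Require Import ring lra zify.
Set Implicit Arguments. Unset Strict Implicit. Unset Printing Implicit Defensive.
Import Order.TTheory GRing.Theory Num.Theory.
Local Open Scope ring_scope.

(* H is the Kronecker product T (x) I_n of the scalar L x L tridiagonal
   (Jacobi) matrix T with diagonal d_a and off-diagonals -1.  So the proof
   splits into three independent parts.
   1. Block lifting: [blockmx n N f] is the matrix (f a b I_n)_{a,b}; lifting
      is multiplicative and sends the identity to the identity, so it suffices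
      to invert T.
   2. Green's function of a Jacobi matrix: if u solves the rows 0..L-2 of
      T x = 0 (left boundary), v solves the rows 1..L-1 (right boundary), and
      the Wronskian is normalised by u_0 (T v)_0 = 1, then
      y_{ab} = u_{min(a,b)} v_{max(a,b)} is the inverse of T.
   3. The concrete data: with r = rho, one has 0 < r < 1,
      delta n + 2 = r + 1/r and q_n + 1 = 1/r; then v_b = r^(b+1) and
      u_a = (1 - r^(2a+2)) / ((1 - r^2) r^a) qualify, and
      y_{t,t+tau} = r^(tau+1) (1 - r^(2t+2)) / (1 - r^2) >= r^(tau+1),
      which dominates the claimed bound (1 - r)/(r + 1/r) r^tau. *)

Definition blockmx (R : pzRingType) (n N : nat) (f : nat -> nat -> R) : 'M[R]_N :=
  \matrix_(i < N, j < N)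
    if (i %% n == j %% n)%N then f (i %/ n)%N (j %/ n)%N else 0.

Section BlockLifting.
Variables (R : pzRingType) (n N : nat).
Hypotheses (n_gt0 : (0 < n)%N) (n_dvd_N : (n %| N)%N).

Lemma eq_blockmx (f g : nat -> nat -> R) :
  (forall a b, (a < N %/ n)%N -> (b < N %/ n)%N -> f a b = g a b) ->
  blockmx n N f = blockmx n N g.
Proof.
move=> efg; apply/matrixP => i j; rewrite !mxE.
by case: ifP => // _; rewrite efg // ltn_divLR ?divnK.
Qed.

Lemma sum_block_slice (F : nat -> R) (p : nat) : (p < n)%N ->
  \sum_(k < N) (if (k %% n == p)%N then F (k %/ n)%N else 0)
  = \sum_(0 <= c < N %/ n) F c.
Proof.
move=> pn; rewrite -(big_mkord xpredT (fun k => if (k %% n == p)%N then F (k %/ n)%N else 0)).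
have [L ->] := dvdnP n_dvd_N; rewrite mulnK //.
elim: L => [|L IH]; first by rewrite mul0n !big_geq.
rewrite big_nat_recr //= mulSnr (@big_cat_nat _ _ _ (L * n)%N) ?leq_addr //= IH.
congr (_ + _); rewrite -{1}(add0n (L * n)%N) big_addn addKn.
transitivity (\sum_(0 <= k < n | k == p) F L); last by rewrite big_nat1_eq pn.
rewrite [RHS]big_mkcond; apply: eq_big_nat => k /= kn.
by rewrite addnC modnMDl modn_small // divnMDl // divn_small ?addn0.
Qed.

Lemma blockmx_mul (f g : nat -> nat -> R) :
  blockmx n N f *m blockmx n N g
  = blockmx n N (fun a b => \sum_(0 <= c < N %/ n) f a c * g c b).
Proof.
apply/matrixP => i j; rewrite !mxE.
have [eij|nij] := eqVneq (i %% n)%N (j %% n)%N; last first.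
  apply: big1 => k _; rewrite !mxE.
  case: (i %% n =P k %% n)%N => [eik|]; last by rewrite mul0r.
  by case: (k %% n =P j %% n)%N => [ekj|]; [move: nij; rewrite eik ekj eqxx | rewrite mulr0].
rewrite -(sum_block_slice _ (ltn_pmod j n_gt0)); apply: eq_bigr => k _.
rewrite !mxE eij (eq_sym (j %% n)%N).
by case: (k %% n =P j %% n)%N => _; rewrite ?mulr0.
Qed.

Lemma blockmx1 : blockmx n N (fun a b => (a == b)%:R : R) = 1%:M.
Proof.
apply/matrixP => i j; rewrite !mxE.
case: (i %% n =P j %% n)%N => [emod|nmod].
  suff -> : (i %/ n == j %/ n)%N = (i == j) by [].
  apply/eqP/eqP => [ediv|-> //].
  by apply: val_inj; rewrite /= (divn_eq i n) (divn_eq j n) ediv emod.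
by case: (i =P j) => // eij; case: nmod; rewrite eij.
Qed.

End BlockLifting.

Definition jrow (R : pzRingType) (L : nat) (d x : nat -> R) (a : nat) : R :=
  d a * x a - (if (a.+1 < L)%N then x a.+1 else 0)
            - (if (0 < a)%N then x a.-1 else 0).

Definition green (R : pzRingType) (u v : nat -> R) (a b : nat) : R :=
  if (a <= b)%N then u a * v b else u b * v a.

Definition tridiag (R : pzRingType) (d : nat -> R) (a b : nat) : R :=
  if a == b then d a else if (a.+1 == b) || (b.+1 == a) then -1 else 0.

Section JacobiGreen.
Variables (R : comPzRingType) (L : nat) (d : nat -> R).

Lemma tridiag_sum (x : nat -> R) (a : nat) : (a < L)%N ->
  \sum_(0 <= c < L) tridiag d a c * x c = jrow L d x a.
Proof.
move=> aL.
have split_term c : tridiag d a c * x c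
    = (if c == a then d a * x c else 0) - (if c == a.+1 then x c else 0)
      - (if c.+1 == a then x c else 0).
  rewrite /tridiag; case: (c =P a) => [->|nca].
    by rewrite eqxx (ltn_eqF (ltnSn a)) (gtn_eqF (ltnSn a)); ring.
  rewrite (introF eqP (nesym nca)).
  case: (c =P a.+1) => [->|nca1].
    by rewrite eqxx (gtn_eqF (leqnSn a.+1)) /=; ring.
  rewrite (introF eqP (nesym nca1)) /=.
  by case: (c.+1 =P a) => _; ring.
under eq_bigr => c _ do rewrite split_term.
rewrite !big_split /= !sumrN -!big_mkcond !big_nat1_eq /= aL /jrow.
clear split_term; congr (_ - _ - _); case: a aL => [|a] aL /=.
  by rewrite big1.
by rewrite (eq_bigl (fun c => c == a)) ?big_nat1_eq ?(ltnW aL) // => c; rewrite eqSS.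
Qed.

Lemma jrow_ext (x y : nat -> R) (a : nat) :
  x a.-1 = y a.-1 -> x a = y a -> x a.+1 = y a.+1 -> jrow L d x a = jrow L d y a.
Proof. by rewrite /jrow => -> -> ->. Qed.

Lemma jrowZ (k : R) (x : nat -> R) (a : nat) :
  jrow L d (fun c => k * x c) a = k * jrow L d x a.
Proof. by rewrite /jrow; case: ifP => _; case: ifP => _; ring. Qed.

Variables (u v : nat -> R).

Lemma green_le (a b : nat) : (a <= b)%N -> green u v a b = u a * v b.
Proof. by rewrite /green => ->. Qed.

Lemma green_ge (a b : nat) : (b <= a)%N -> green u v a b = u b * v a.
Proof.
rewrite /green leq_eqVlt => /predU1P [->|ba]; first by rewrite leqnn.
by rewrite leqNgt ba.
Qed.

Lemma green_diag_left (a : nat) : (a.+1 < L)%N ->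
  jrow L d (green u v ^~ a) a = v a * jrow L d u a + (u a.+1 * v a - u a * v a.+1).
Proof.
move=> aL; rewrite /jrow aL green_le // green_ge // green_le ?leq_pred //.
by case: ifP => _; ring.
Qed.

Lemma green_diag_right (a : nat) :
  jrow L d (green u v ^~ a.+1) a.+1
  = u a.+1 * jrow L d v a.+1 + (u a.+1 * v a - u a * v a.+1).
Proof.
rewrite /jrow green_le // green_ge // green_le //=.
by case: ifP => _; ring.
Qed.

Hypothesis u_left : forall a, (a.+1 < L)%N -> jrow L d u a = 0.
Hypothesis v_right : forall a, (0 < a < L)%N -> jrow L d v a = 0.
Hypothesis wronskian : u 0 * jrow L d v 0 = 1.

(* The diagonal rows: the Wronskian is constant along the rows, hence 1. *)
Lemma green_diag (a : nat) : (a < L)%N -> jrow L d (green u v ^~ a) a = 1.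
Proof.
elim: a => [_|a IH aL].
  by rewrite -wronskian -jrowZ; apply: jrow_ext; rewrite green_ge.
rewrite green_diag_right v_right ?aL // mulr0 add0r.
by rewrite -IH 1?ltnW // green_diag_left // u_left // mulr0 add0r.
Qed.

Lemma jrow_green (a b : nat) : (a < L)%N -> (b < L)%N ->
  jrow L d (green u v ^~ b) a = (a == b)%:R.
Proof.
move=> aL bL; case: (ltngtP a b) => [ab|ba|<-]; last exact: green_diag.
- have col c : (c <= b)%N -> green u v c b = v b * u c.
    by move=> cb; rewrite green_le // mulrC.
  transitivity (jrow L d (fun c => v b * u c) a).
    by apply: jrow_ext; apply: col; lia.
  by rewrite jrowZ u_left ?mulr0 //; lia.
- have col c : (b <= c)%N -> green u v c b = u b * v c by exact: green_ge.
  transitivity (jrow L d (fun c => u b * v c) a).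
    by apply: jrow_ext; apply: col; lia.
  by rewrite jrowZ v_right ?mulr0 //; lia.
Qed.

End JacobiGreen.

Definition rho_diag (R : fieldType) (L : nat) (r : R) (a : nat) : R :=
  if a == L.-1 then r^-1 else r + r^-1.

Definition left_sol (R : fieldType) (r : R) (a : nat) : R :=
  (1 - r ^+ a * r ^+ a * r ^+ 2) / ((1 - r ^+ 2) * r ^+ a).

Definition right_sol (R : fieldType) (r : R) (b : nat) : R := r ^+ b.+1.

Section GeometricGreen.
Variables (R : fieldType) (L : nat) (r : R).
Hypotheses (r_neq0 : r != 0) (r2_neq1 : 1 - r ^+ 2 != 0).

(* u solves the rows 0..L-2 since r^a and r^-a satisfy the interior
   recurrence and u_(-1) = 0; v = r^(b+1) solves the interior rows and the
   last row (1/r) v_(L-1) = v_(L-2). *)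
Lemma left_sol_jrow (a : nat) : (a.+1 < L)%N ->
  jrow L (rho_diag L r) (left_sol r) a = 0.
Proof.
move=> aL; rewrite /jrow aL /rho_diag ifF; last by apply/eqP; lia.
rewrite /left_sol; case: a {aL} => [|a] /=; rewrite !exprS ?expr0; field.
all: by rewrite -expr2 r2_neq1 r_neq0 ?expf_neq0.
Qed.

Lemma right_sol_jrow (a : nat) : (0 < a < L)%N ->
  jrow L (rho_diag L r) (right_sol r) a = 0.
Proof.
case: a => [|a] //= aL; rewrite /jrow /rho_diag /right_sol /=.
case: (a.+1 =P L.-1) => [at_last|not_last].
  by rewrite ifF; [rewrite !exprS; field | apply/negbTE; lia].
by rewrite ifT; [rewrite !exprS; field | lia].
Qed.

Lemma geometric_wronskian : left_sol r 0 * jrow L (rho_diag L r) (right_sol r) 0 = 1.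
Proof.
rewrite /left_sol /jrow /rho_diag /right_sol /= !expr0 !mulr1 mul1r divff //.
by case: (0 =P L.-1) => [L_le1|L_gt1]; [rewrite ifF; [field | lia] | rewrite ifT; [field | lia]].
Qed.

End GeometricGreen.

(* On an ordered field with 0 < r < 1 the upper part of the Green's function
   is y_(t, t+tau) = r^(tau+1) (1 - r^(2t+2)) / (1 - r^2) >= r^(tau+1). *)
Lemma geometric_green_lower_bound (R : realFieldType) (r : R) (t tau : nat) :
  0 < r -> r < 1 ->
  (1 - r) / (r + r^-1) * r ^+ tau <= green (left_sol r) (right_sol r) t (t + tau).
Proof.
move=> r_gt0 r_lt1.
have rt_ge0 : 0 <= r ^+ t by rewrite exprn_ge0 // ltW.
have rt_le1 : r ^+ t <= 1 by rewrite exprn_ile1 // ltW.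
have r2_lt1 : 0 < 1 - r ^+ 2 by rewrite subr_gt0 expr2; nra.
have -> : green (left_sol r) (right_sol r) t (t + tau)
    = r ^+ tau.+1 * ((1 - r ^+ t * r ^+ t * r ^+ 2) / (1 - r ^+ 2)).
  rewrite green_le ?leq_addr // /left_sol /right_sol -addnS exprD.
  by field; rewrite (gt_eqF r2_lt1) expf_neq0 // gt_eqF.
have ratio_ge1 : 1 <= (1 - r ^+ t * r ^+ t * r ^+ 2) / (1 - r ^+ 2).
  rewrite ler_pdivlMr // mul1r lerD2l lerN2; apply: ler_piMl; first exact: exprn_ge0 (ltW r_gt0).
  exact: mulr_ile1.
have coef_le_r : (1 - r) / (r + r^-1) <= r.
  rewrite ler_pdivrMr ?addr_gt0 ?invr_gt0 // mulrDr mulfV ?gt_eqF //; nra.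
apply: (@le_trans _ _ (r ^+ tau.+1)).
  by rewrite exprS ler_pM2r ?exprn_gt0.
by apply: ler_peMr; rewrite // exprn_ge0 // ltW.
Qed.

Section RhoFacts.
Variables (R : rcfType) (n : nat) (delta : R).
Hypotheses (n_gt0 : (1 <= n)%N) (delta_gt0 : 0 < delta).

Local Notation Z := (Num.sqrt (zeta n delta)).

Lemma dn_gt0 : 0 < delta * n%:R.
Proof. by rewrite mulr_gt0 // ltr0n. Qed.

Lemma zeta_gt1 : 1 < zeta n delta.
Proof. by rewrite /zeta ltr_pdivlMr ?dn_gt0 // mul1r ltrDl. Qed.

Lemma sqrt_zeta_sqr : Z ^+ 2 * (delta * n%:R) = delta * n%:R + 4.
Proof.
rewrite sqr_sqrtr ?(le_trans ler01) ?ltW ?zeta_gt1 //.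
by rewrite /zeta divfK // gt_eqF ?dn_gt0.
Qed.

Lemma sqrt_zeta_gt1 : 1 < Z.
Proof. by rewrite -sqrtr1 ltr_sqrt ?zeta_gt1 // (lt_trans ltr01 zeta_gt1). Qed.

(* q_n = (delta n)(1 + Z) / 2, since n^2 delta^2 + 4 n delta = (delta n)^2 zeta. *)
Lemma qn_sqrt_zeta : qn n delta = delta * n%:R * (1 + Z) / 2.
Proof.
rewrite /qn.
have -> : n%:R ^+ 2 * delta ^+ 2 + 4 * n%:R * delta = (delta * n%:R) ^+ 2 * zeta n delta.
  by rewrite /zeta; field; rewrite pnatr_eq0 -lt0n n_gt0 gt_eqF.
rewrite sqrtrM ?sqr_ge0 // sqrtr_sqr ger0_norm ?ltW ?dn_gt0 //.
by rewrite [n%:R * _]mulrC mulrDr mulr1.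
Qed.

Lemma rho_gt0 : 0 < rho n delta.
Proof. have := sqrt_zeta_gt1; rewrite /rho => Z_gt1; rewrite divr_gt0 //; lra. Qed.

Lemma rho_lt1 : rho n delta < 1.
Proof. have := sqrt_zeta_gt1; rewrite /rho => Z_gt1; rewrite ltr_pdivrMr; lra. Qed.

Lemma rho_add_inv : delta * n%:R + 2 = rho n delta + (rho n delta)^-1.
Proof.
have Z_gt1 := sqrt_zeta_gt1; have ZZ := sqrt_zeta_sqr.
rewrite /rho invf_div; apply: (@mulIf _ (Z ^+ 2 - 1)); first by rewrite gt_eqF //; nra.
have -> : ((Z - 1) / (Z + 1) + (Z + 1) / (Z - 1)) * (Z ^+ 2 - 1) = 2 * Z ^+ 2 + 2.
  by field; rewrite !gt_eqF //; lra.
apply: (@mulIf _ (delta * n%:R)); first by rewrite gt_eqF ?dn_gt0.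
have := dn_gt0; nra.
Qed.

Lemma qn_add1 : qn n delta + 1 = (rho n delta)^-1.
Proof.
have Z_gt1 := sqrt_zeta_gt1; have ZZ := sqrt_zeta_sqr.
rewrite qn_sqrt_zeta /rho invf_div; apply: (@mulIf _ (Z - 1)); first by rewrite gt_eqF //; lra.
have -> : (Z + 1) / (Z - 1) * (Z - 1) = Z + 1 by field; rewrite gt_eqF //; lra.
nra.
Qed.

End RhoFacts.

Theorem lemma11 (R : rcfType) (n N : nat) (delta : R)
    (hn : (1 <= n)%N) (hdelta : 0 < delta) (hN : (n %| N)%N) :
  Hmat N n delta \in unitmx /\
  exists y : nat -> nat -> R,
    (forall i j : 'I_N,
        invmx (Hmat N n delta) i j =
        (if (i %% n == j %% n)%N then y (i %/ n)%N (j %/ n)%N else 0)) /\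
    (forall t tau : nat, (t + tau < N %/ n)%N ->
        (1 - rho n delta) / (delta * n%:R + 2) * rho n delta ^+ tau
          <= y t (t + tau)%N /\
        0 < (1 - rho n delta) / (delta * n%:R + 2) * rho n delta ^+ tau).
Proof.
have r_gt0 := rho_gt0 hn hdelta; have r_lt1 := rho_lt1 hn hdelta.
have diag_eq := rho_add_inv hn hdelta; have last_eq := qn_add1 hn hdelta.
set r := rho n delta in r_gt0 r_lt1 diag_eq last_eq *; set L := (N %/ n)%N.
have r_neq0 : r != 0 by rewrite gt_eqF.
have r2_neq1 : 1 - r ^+ 2 != 0 by rewrite subr_eq0 eq_sym expr2 lt_eqF //; nra.
have H_block : Hmat N n delta = blockmx n N (tridiag (rho_diag L r)).
  by rewrite /Hmat last_eq diag_eq.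
pose Y := blockmx n N (green (left_sol r) (right_sol r)).
have HY : Hmat N n delta *m Y = 1%:M.
  rewrite H_block blockmx_mul // -(@blockmx1 R n N); apply: eq_blockmx => // a b aL bL.
  rewrite tridiag_sum // jrow_green //.
  - exact: left_sol_jrow r_neq0 r2_neq1.
  - exact: right_sol_jrow r_neq0 r2_neq1.
  - exact: geometric_wronskian r_neq0 r2_neq1.
have [H_unit _] := mulmx1_unit HY.
split=> //; exists (green (left_sol r) (right_sol r)); split.
  have -> : invmx (Hmat N n delta) = Y by rewrite -[invmx _]mulmx1 -HY mulmxA mulVmx ?mul1mx.
  by move=> i j; rewrite mxE.
move=> t tau _; rewrite diag_eq; split; first exact: geometric_green_lower_bound.
by rewrite mulr_gt0 ?exprn_gt0 // divr_gt0 ?subr_gt0 ?addr_gt0 ?invr_gt0.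
Qed.
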